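(* Let $\mathbf R=\{R_i,t_i\}_{i\ge0}$ be a preperfectoid tower arising from a pair $(R,I_0)$ such that every $R_i$ is $I_0$-adically separated (i.e. $\bigcap_n I_0^nR_i=0$). Then every $t_i$ is injective and every $R_i$ is reduced.
   Context: Fix a prime $p$; rings are commutative with $1$. For a ring $A$, an ideal $I$ and an $A$-module $M$, $M_{I\text{-tor}}$ is the submodule of $x\in M$ such that for every $a\in I$ some $a^nx=0$; $\varphi_{I,A}\colon A_{I\text{-tor}}\to A/IA$ is inclusion followed by projection. $\varphi$ is absolute Frobenius. A tower of rings $\{R_i,t_i\}_{i\ge0}$ is a sequence of ring maps $R_0\xrightarrow{t_0}R_1\to\cdots$. For a ring $R$ and ideal $I_0$, write $\overline{R_i}=R_i/I_0R_i$, $\overline{t_i}$ the induced maps. A purely inseparable tower arising from $(R,I_0)$: (a) $R_0=R$, $p\in I_0$; (b) each $\overline{t_i}$ injective; (c) $\varphi(\overline{R_{i+1}})\subset\overline{t_i}(\overline{R_i})$; then $F_i\colon\overline{R_{i+1}}\to\overline{R_i}$ is the unique ring map with $\overline{t_i}\circ F_i=\varphi$. A preperfectoid tower is a purely inseparable tower with: (d) each $F_i$ surjective; (f) $I_0$ principal and a principal ideal $I_1\subset R_1$ with $I_1^p=I_0R_1$ and $\ker F_i=I_1\overline{R_{i+1}}$ for all $i$; (g) for all $i$, $I_0(R_i)_{I_0\text{-tor}}=0$ and a bijection $(F_i)_{\mathrm{tor}}\colon(R_{i+1})_{I_0\text{-tor}}\to(R_i)_{I_0\text{-tor}}$ with $\varphi_{I_0,R_i}\circ(F_i)_{\mathrm{tor}}=F_i\circ\varphi_{I_0,R_{i+1}}$.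 *)

From HB Require Import structures.
From mathcomp Require Import all_boot all_algebra.
Set Implicit Arguments. Unset Strict Implicit. Unset Printing Implicit Defensive.
Import GRing.Theory.
Local Open Scope ring_scope.

Section Tower.
Variables (R : nat -> comPzRingType) (t : forall i, {rmorphism R i -> R i.+1}).

Fixpoint from0 (i : nat) : R 0%N -> R i :=
  match i as n return R 0%N -> R n with
  | 0 => fun x => x
  | j.+1 => fun x => t j (from0 j x)
  end.

Fixpoint from1 (i : nat) : R 1%N -> R i.+1 :=
  match i as n return R 1%N -> R n.+1 with
  | 0 => fun x => x
  | j.+1 => fun x => t j.+1 (from1 j x)
  end.

Definition pdvd (A : comPzRingType) (a x : A) : Prop := exists y, x = a * y.

Variables (p : nat) (f0 : R 0%N).
(* I_0 = f0 * R_0 (principal); I_0 R_i = (fI i) * R_i *)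
Definition fI (i : nat) : R i := from0 i f0.

(* Frel y x  <->  F_i (class of y in R_{i+1}/I_0R_{i+1}) = class of x in R_i/I_0R_i,
   i.e. tbar_i (xbar) = (ybar)^p *)
Definition Frel (i : nat) (y : R i.+1) (x : R i) : Prop :=
  pdvd (fI i.+1) (t i x - y ^+ p).

Definition I0tor (i : nat) (x : R i) : Prop :=
  forall a : R 0%N, pdvd f0 a -> exists n, (from0 i a) ^+ n * x = 0.

Definition purely_inseparable : Prop :=
  [/\ pdvd f0 (p%:R : R 0%N),
      forall i (x : R i), pdvd (fI i.+1) (t i x) -> pdvd (fI i) x
    & forall i (y : R i.+1), exists x : R i, pdvd (fI i.+1) (y ^+ p - t i x)].

Definition preperfectoid : Prop :=
  [/\ purely_inseparable,
      forall i (x : R i), exists y : R i.+1, Frel y x,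
      (* (f) I_1 = g R_1 with I_1^p = I_0 R_1 and ker F_i = I_1 (R_{i+1}/I_0 R_{i+1}) *)
      exists g : R 1%N,
        [/\ pdvd (fI 1%N) (g ^+ p), pdvd (g ^+ p) (fI 1%N) &
            forall i (y : R i.+1),
              Frel y 0 <-> exists a b, y = from1 i g * a + fI i.+1 * b]
    &
      forall i,
        (forall (a : R 0%N) (x : R i), pdvd f0 a -> I0tor x -> from0 i a * x = 0) /\
        exists Ft : R i.+1 -> R i,
          [/\ forall y, I0tor y -> I0tor (Ft y),
              forall y1 y2, I0tor y1 -> I0tor y2 -> Ft y1 = Ft y2 -> y1 = y2,
              forall x, I0tor x -> exists2 y, I0tor y & Ft y = x
            & forall y, I0tor y -> Frel y (Ft y)]].

Definition I0_separated : Prop :=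
  forall i (x : R i), (forall n, pdvd (fI i ^+ n) x) -> x = 0.

End Tower.

From HB Require Import structures.
From mathcomp Require Import all_boot all_algebra.
From mathcomp Require Import ring.

(* Write f for the generator f0 of I_0 and G for the generator g of I_1, so that f and G^p
   are associates. As f kills the I_0-torsion, torsion means "killed by f"; the bijection
   F_tor then shows that a torsion element with vanishing p-th power is 0, and hence that
   G kills the torsion too. From the surjectivity of F_tor and the description of ker F one
   gets that an element whose p-th power is torsion modulo f lies in torsion + G R. This
   shows that if f kills t x, then x is congruent to a torsion element modulo every power
   of f, so t is injective by separatedness. Likewise y^p = 0 makes y divisible by every
   power of G, hence by every power of f, so y = 0 in R_(i+1), and injectivity of t brings
   this down to R_i. Finally x^n = 0 implies x^(p^n) = 0. *)

Set Implicit Arguments.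
Unset Strict Implicit.
Unset Printing Implicit Defensive.
Import GRing.Theory.
Local Open Scope ring_scope.

Section PrincipalIdeal.
Variable A : comPzRingType.
Implicit Types a b x y : A.

Lemma pdvd0 a : pdvd a 0. Proof. by exists 0; rewrite mulr0. Qed.

Lemma pdvdrr a : pdvd a a. Proof. by exists 1; rewrite mulr1. Qed.

Lemma pdvdD a x y : pdvd a x -> pdvd a y -> pdvd a (x + y).
Proof. by move=> [u ->] [v ->]; exists (u + v); rewrite mulrDr. Qed.

Lemma pdvdN a x : pdvd a x -> pdvd a (- x).
Proof. by move=> [u ->]; exists (- u); rewrite mulrN. Qed.

Lemma pdvdB a x y : pdvd a x -> pdvd a y -> pdvd a (x - y).
Proof. by move=> ax ay; apply: pdvdD ax (pdvdN ay). Qed.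

Lemma pdvd_mulr a x y : pdvd a x -> pdvd a (x * y).
Proof. by move=> [u ->]; exists (u * y); rewrite mulrA. Qed.

Lemma pdvd_mull a x y : pdvd a x -> pdvd a (y * x).
Proof. by rewrite mulrC; apply: pdvd_mulr. Qed.

Lemma pdvd_exprD_prime (p : nat) a x y : prime p -> pdvd a p%:R ->
  pdvd a ((x + y) ^+ p - x ^+ p - y ^+ p).
Proof.
case: p => [|q] // q_prime ap.
rewrite exprDn big_ord_recr big_ord_recl /= subn0 subnn bin0 binn !mulr1n.
rewrite expr0 mulr1 mul1r.
set S := \sum_(_ < _) _.
have -> : x ^+ q.+1 + S + y ^+ q.+1 - x ^+ q.+1 - y ^+ q.+1 = S by ring.
apply: big_ind => [|u v|i _]; [exact: pdvd0 | exact: pdvdD |].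
have /dvdnP[k ->] : (q.+1 %| 'C(q.+1, bump 0 i))%N.
  by apply: prime_dvd_bin; rewrite //= ltnS ltn_ord.
by rewrite mulrnA -mulr_natr; apply: pdvd_mull.
Qed.

Lemma pdvd_exprB_prime (p : nat) a x y : prime p -> pdvd a p%:R ->
  pdvd a ((x - y) ^+ p - (x ^+ p - y ^+ p)).
Proof.
move=> p_prime ap.
have -> : (x - y) ^+ p - (x ^+ p - y ^+ p) =
          - ((x - y + y) ^+ p - (x - y) ^+ p - y ^+ p) by rewrite subrK; ring.
exact/pdvdN/pdvd_exprD_prime.
Qed.

End PrincipalIdeal.

Lemma pdvd_morph (A B : comPzRingType) (h : A -> B) a x :
  {morph h : u v / u * v} -> pdvd a x -> pdvd (h a) (h x).
Proof. by move=> hM [u ->]; exists (h u). Qed.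

Lemma reduced_of_expp_eq0 (A : pzRingType) (p : nat) : (1 < p)%N ->
  (forall x : A, x ^+ p = 0 -> x = 0) -> forall (x : A) n, x ^+ n = 0 -> x = 0.
Proof.
move=> p_gt1 expp_eq0 x n xn.
have : x ^+ (p ^ n) = 0 by rewrite -(subnK (ltnW (ltn_expl n p_gt1))) exprD xn mulr0.
elim: n {xn} => [|n IH]; first by rewrite expn0 expr1.
by rewrite expnSr exprM => /expp_eq0.
Qed.

Section Tower.
Variables (R : nat -> comPzRingType) (t : forall i, {rmorphism R i -> R i.+1}).

Lemma from0M i : {morph from0 t i : a b / a * b}.
Proof. by elim: i => [//|i IH] a b /=; rewrite IH rmorphM. Qed.

Lemma from0_nat i n : from0 t i n%:R = n%:R.
Proof. by elim: i => [//|i IH] /=; rewrite IH rmorph_nat. Qed.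

Lemma from1M i : {morph from1 t i : a b / a * b}.
Proof. by elim: i => [//|i IH] a b /=; rewrite IH rmorphM. Qed.

Lemma from1X i x n : from1 t i (x ^+ n) = from1 t i x ^+ n.
Proof. by elim: i => [//|i IH] /=; rewrite IH rmorphXn. Qed.

Lemma from1_fI f0 i : from1 t i (fI t f0 1) = fI t f0 i.+1.
Proof. by elim: i => [//|i IH] /=; rewrite IH. Qed.

Variables (p : nat) (f0 : R 0%N) (g : R 1%N).
Local Notation f := (fI t f0).
Hypothesis p_prime : prime p.
Hypothesis p_in_I0 : pdvd f0 p%:R.
Hypothesis tbar_inj : forall i (x : R i), pdvd (f i.+1) (t i x) -> pdvd (f i) x.
Hypothesis F_surj : forall i (x : R i), exists y, Frel t p f0 y x.
(* f i and G i generate I_0 R_i and I_1 R_(i+1). *)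
Local Notation G i := (from1 t i g).
Hypotheses (f_dvd_gp : pdvd (f 1%N) (g ^+ p)) (gp_dvd_f : pdvd (g ^+ p) (f 1%N)).
Hypothesis kerF : forall i (y : R i.+1),
  Frel t p f0 y 0 -> exists a b, y = G i * a + f i.+1 * b.
Hypothesis I0_ann_tor : forall i (a : R 0%N) (x : R i),
  pdvd f0 a -> I0tor t f0 x -> from0 t i a * x = 0.
Hypothesis Ftor : forall i, exists Ft : R i.+1 -> R i,
  [/\ forall y, I0tor t f0 y -> I0tor t f0 (Ft y),
      forall y1 y2, I0tor t f0 y1 -> I0tor t f0 y2 -> Ft y1 = Ft y2 -> y1 = y2,
      forall x, I0tor t f0 x -> exists2 y, I0tor t f0 y & Ft y = x
    & forall y, I0tor t f0 y -> Frel t p f0 y (Ft y)].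
Hypothesis separated : forall i (x : R i), (forall n, pdvd (f i ^+ n) x) -> x = 0.

Let p_gt0 : (0 < p)%N. Proof. exact: prime_gt0. Qed.

Let p_pred_gt0 : (0 < p.-1)%N. Proof. by rewrite ltn_predRL; apply: prime_gt1. Qed.

Let expr_p_pred (A : pzRingType) (x : A) : x ^+ p = x ^+ p.-1 * x.
Proof. by rewrite -exprSr prednK. Qed.

Lemma pdvd_fI_p i : pdvd (f i) p%:R.
Proof. by rewrite -(from0_nat i); apply: pdvd_morph (from0M i) _. Qed.

Lemma I0tor_annX i n (x : R i) : f i ^+ n * x = 0 -> I0tor t f0 x.
Proof.
move=> fnx _ [c ->]; exists n.
by rewrite from0M exprMn mulrAC [from0 t i f0 ^+ n * x]fnx mul0r.
Qed.

Lemma I0torE i (x : R i) : I0tor t f0 x <-> f i * x = 0.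
Proof.
split=> [tor_x|fx]; first by apply: I0_ann_tor tor_x; apply: pdvdrr.
by apply: (I0tor_annX (n := 1)); rewrite expr1.
Qed.

Lemma annX_ann i n (x : R i) : f i ^+ n * x = 0 -> f i * x = 0.
Proof. by move/I0tor_annX/I0torE. Qed.

Lemma ann_pdvd_eq0 i (x : R i) : f i * x = 0 -> pdvd (f i) x -> x = 0.
Proof.
move=> fx [z xE]; rewrite xE; apply: (annX_ann (n := 2)).
by rewrite expr2 -mulrA -xE.
Qed.

Lemma Ftor_ann i : exists Ft : R i.+1 -> R i,
  [/\ forall y, f i.+1 * y = 0 -> f i * Ft y = 0,
      forall y1 y2, f i.+1 * y1 = 0 -> f i.+1 * y2 = 0 -> Ft y1 = Ft y2 -> y1 = y2,
      forall x, f i * x = 0 -> exists2 y, f i.+1 * y = 0 & Ft y = x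
    & forall y, f i.+1 * y = 0 -> Frel t p f0 y (Ft y)].
Proof.
have [Ft [Ft_tor Ft_inj Ft_onto Ft_frob]] := Ftor i.
exists Ft; split.
- by move=> y /I0torE/Ft_tor/I0torE.
- by move=> y1 y2 /I0torE + /I0torE; apply: Ft_inj.
- by move=> x /I0torE/Ft_onto [y /I0torE]; exists y.
- by move=> y /I0torE/Ft_frob.
Qed.

Lemma ann_expp_eq0 i (y : R i.+1) : f i.+1 * y = 0 -> y ^+ p = 0 -> y = 0.
Proof.
have [Ft [Ft_tor Ft_inj _ Ft_frob]] := Ftor_ann i.
have Ft_eq0 z : f i.+1 * z = 0 -> z ^+ p = 0 -> Ft z = 0.
  move=> fz zp; apply: ann_pdvd_eq0 (Ft_tor z fz) (tbar_inj _).
  by have := Ft_frob z fz; rewrite /Frel zp subr0.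
move=> fy yp; apply: Ft_inj; rewrite ?mulr0 // !Ft_eq0 ?mulr0 //.
by rewrite expr0n eqn0Ngt p_gt0.
Qed.

Lemma fI_dvd_Gp i : pdvd (f i.+1) (G i ^+ p).
Proof. by rewrite -from1X -from1_fI; apply: pdvd_morph (from1M i) _. Qed.

Lemma Gp_dvd_fI i : pdvd (G i ^+ p) (f i.+1).
Proof. by rewrite -from1X -from1_fI; apply: pdvd_morph (from1M i) _. Qed.

Lemma ann_G i (y : R i.+1) : f i.+1 * y = 0 -> G i * y = 0.
Proof.
move=> fy; apply: ann_expp_eq0; first by rewrite mulrCA fy mulr0.
have [a Gp] := fI_dvd_Gp i.
rewrite exprMn Gp expr_p_pred.
have -> : f i.+1 * a * (y ^+ p.-1 * y) = a * y ^+ p.-1 * (f i.+1 * y) by ring.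
by rewrite fy mulr0.
Qed.

Definition tor_plus_G i (z : R i.+1) :=
  exists tau e, f i.+1 * tau = 0 /\ z = tau + G i * e.

Lemma tor_plus_G_of_t i (z : R i.+1) (m a b : R i.+2) :
  f i.+2 * m = 0 -> t i.+1 z - m = G i.+1 * a + f i.+2 * b -> tor_plus_G z.
Proof.
move=> fm tzE.
have Gm : G i.+1 ^+ p.-1 * m = 0.
  by case: p.-1 p_pred_gt0 => // k _; rewrite exprSr -mulrA ann_G ?mulr0.
(* G^(p-1) kills m and turns G a into G^p a, a multiple of f. *)
have [w Gz] : pdvd (f i.+1) (G i ^+ p.-1 * z).
  apply: tbar_inj; rewrite rmorphM rmorphXn -[t i.+1 z](subrK m) tzE /=.
  rewrite !mulrDr Gm addr0 mulrA -expr_p_pred.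
  by apply: pdvdD; [apply: pdvd_mulr (fI_dvd_Gp _) | apply/pdvd_mull/pdvd_mulr/pdvdrr].
have [b' fE] := Gp_dvd_fI i.
exists (z - G i * (b' * w)), (b' * w); split; last by rewrite subrK.
rewrite mulrBr; have -> : f i.+1 * z = G i * b' * (G i ^+ p.-1 * z).
  by rewrite fE expr_p_pred; ring.
by rewrite Gz; ring.
Qed.

Lemma tor_plus_G_of_root i (z u : R i.+1) :
  f i.+1 * u = 0 -> pdvd (f i.+1) (z ^+ p - u) -> tor_plus_G z.
Proof.
move=> fu fzu; have [Ft [_ _ Ft_onto Ft_frob]] := Ftor_ann i.+1.
have [m fm uE] := Ft_onto u fu.
have : Frel t p f0 (t i.+1 z - m) 0.
  rewrite /Frel rmorph0 sub0r; apply: pdvdN.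
  have -> : (t i.+1 z - m) ^+ p = ((t i.+1 z - m) ^+ p - (t i.+1 z ^+ p - m ^+ p))
                                 + t i.+1 (z ^+ p - u) + (t i.+1 u - m ^+ p).
    by rewrite rmorphB rmorphXn; ring.
  rewrite -uE; apply: pdvdD; last exact: Ft_frob.
  apply: pdvdD; first exact: pdvd_exprB_prime (pdvd_fI_p _).
  by rewrite uE; apply: pdvd_morph (rmorphM _) fzu.
by case/kerF=> a [b]; apply: tor_plus_G_of_t fm.
Qed.

Lemma approx_tor i (x : R i) : f i.+1 * t i x = 0 ->
  exists2 tau, f i * tau = 0 & pdvd (f i) (x - tau).
Proof.
move=> ftx; have [y txy] := F_surj x.
have [s [e [fs yE]]] : tor_plus_G y.
  by apply: tor_plus_G_of_root ftx _; rewrite -opprB; apply: pdvdN.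
have [Ft [Ft_tor _ _ Ft_frob]] := Ftor_ann i.
exists (Ft s); first exact: Ft_tor.
(* t x = y^p = s^p = t (Ft s) modulo f, as (G e)^p is a multiple of f. *)
apply: tbar_inj; rewrite rmorphB.
have -> : t i x - t i (Ft s) = (t i x - y ^+ p) + (y ^+ p - s ^+ p - (G i * e) ^+ p)
                               + G i ^+ p * e ^+ p - (t i (Ft s) - s ^+ p).
  by rewrite exprMn; ring.
apply: pdvdB; last exact: Ft_frob.
apply: pdvdD; last exact: pdvd_mulr (fI_dvd_Gp _).
apply: pdvdD => //; rewrite yE; exact: pdvd_exprD_prime (pdvd_fI_p _).
Qed.

Lemma approx_torX i n (x : R i) : f i.+1 * t i x = 0 ->
  exists2 tau, f i * tau = 0 & pdvd (f i ^+ n) (x - tau).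
Proof.
elim: n x => [|n IH] x ftx.
  by exists 0; [rewrite mulr0 | exists (x - 0); rewrite expr0 mul1r].
have [tau ftau [w xE]] := approx_tor ftx.
have ftM v : f i.+1 * t i v = t i (f i * v) by rewrite rmorphM.
have ftw : f i.+1 * t i w = 0.
  apply: (annX_ann (n := 2)); rewrite expr2 -mulrA.
  by rewrite ftM -xE rmorphB mulrBr ftx ftM ftau rmorph0 subrr.
have [tau' ftau' [c wE]] := IH w ftw.
exists tau => //; exists c.
by rewrite xE -(subrK tau' w) mulrDr ftau' addr0 wE exprS mulrA.
Qed.

Lemma t_injective i : injective (t i).
Proof.
apply: raddf_inj => x tx0.
have ftx : f i.+1 * t i x = 0 by rewrite tx0 mulr0.
apply: ann_pdvd_eq0; last by apply: tbar_inj; rewrite tx0; apply: pdvd0.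
apply: separated => n; have [tau ftau [c xE]] := approx_torX n ftx.
by exists (f i * c); rewrite -(subrK tau x) mulrDr ftau addr0 xE mulrCA.
Qed.

Lemma expp_eq0_succ i (y : R i.+1) : y ^+ p = 0 -> y = 0.
Proof.
move=> yp; have [b' fE] := Gp_dvd_fI i.
have G_dvd k : pdvd (G i ^+ k.+1) y.
  elim: k => [|k [w yE]].
    have [|a [b yE]] := kerF (y := y); first by rewrite /Frel rmorph0 yp subrr; apply: pdvd0.
    by exists (a + G i ^+ p.-1 * b' * b); rewrite yE fE expr_p_pred; ring.
  have fwp : f i.+1 * w ^+ p = 0.
    apply: (annX_ann (n := k.+1)).
    by rewrite fE exprMn -exprM mulnC exprM mulrAC -exprMn -yE yp mul0r.
  have [|s [e [fs wE]]] := tor_plus_G_of_root (z := w) fwp; first by rewrite subrr; apply: pdvd0.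
  exists e; rewrite yE wE mulrDr exprSr -mulrA ann_G // mulr0 add0r.
  by rewrite !exprSr -!mulrA.
apply: separated => n; have [e yE] := G_dvd (p * n)%N; have [a Gp] := fI_dvd_Gp i.
by exists (a ^+ n * G i * e); rewrite yE exprSr exprM Gp exprMn; ring.
Qed.

Lemma expp_eq0 i (x : R i) : x ^+ p = 0 -> x = 0.
Proof.
move=> xp; apply: t_injective; rewrite rmorph0.
by apply: expp_eq0_succ; rewrite -rmorphXn xp rmorph0.
Qed.

End Tower.

Theorem corollary3p12 (p : nat) (hp : prime p)
  (R : nat -> comPzRingType) (t : forall i, {rmorphism R i -> R i.+1}) (f0 : R 0%N) :
  preperfectoid t p f0 -> I0_separated t f0 ->
  (forall i, injective (t i)) /\ (forall i (x : R i) (n : nat), x ^+ n = 0 -> x = 0).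
Proof.
move=> [[p_in_I0 tbar_inj _] F_surj [g [f_dvd_gp gp_dvd_f kerF]] tor] separated.
have kerF_sub i y := (kerF i y).1.
have I0_ann_tor i := (tor i).1.
have Ftor i := (tor i).2.
split=> [i | i]; first by apply: (t_injective (t := t) (f0 := f0) (g := g) hp).
apply: (reduced_of_expp_eq0 (prime_gt1 hp)).
by apply: (expp_eq0 (t := t) (f0 := f0) (g := g) hp).
Qed.
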